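(* Let $\sigma$ be a unary implicit signature containing $\kappa$, let $X$ be a finite alphabet and let $K,L\subseteq X^+$ be rational languages. Then, with closures taken in $\Omega^\sigma_X\mathsf S$, $\overline{KL}=\overline{K}\,\overline{L}$.
   Context: $\mathsf S$ is the pseudovariety of all finite semigroups; $\overline{\Omega}_X\mathsf S$ is the free profinite semigroup on $X$ (containing $X^+$), and $\Omega^\sigma_X\mathsf S$ is its subalgebra generated by $X$ under the operations of $\sigma$, with the induced topology. $\widehat{\mathbb N}$ is the profinite completion of $(\mathbb N,+)$. A unary implicit signature is one consisting of multiplication together with at least one, and possibly several, unary operations $x\mapsto x^\alpha$ with $\alpha\in\widehat{\mathbb N}\setminus\mathbb N$; $\kappa$ is the signature consisting of multiplication and the $(\omega-1)$-power. *)

From mathcomp Require Import all_boot.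
Set Implicit Arguments. Unset Strict Implicit. Unset Printing Implicit Defensive.

Record fsg := FSG {
  fsg_car :> finType;
  fsg_op : fsg_car -> fsg_car -> fsg_car;
  fsg_assoc : associative fsg_op }.

Definition fsg_hom (S T : fsg) (h : S -> T) : Prop :=
  forall x y, h (fsg_op x y) = fsg_op (h x) (h y).

Record fmon := FMon {
  fmon_car :> finType;
  fmon_op : fmon_car -> fmon_car -> fmon_car;
  fmon_one : fmon_car;
  fmon_assoc : associative fmon_op;
  fmon_mul1 : left_id fmon_one fmon_op;
  fmon_mulr1 : right_id fmon_one fmon_op }.

Definition fmon_hom (M N : fmon) (h : M -> N) : Prop :=
  h (fmon_one M) = fmon_one N /\
  forall x y, h (fmon_op x y) = fmon_op (h x) (h y).

Definition mpow (M : fmon) (m : M) (n : nat) : M := iter n (fmon_op m) (fmon_one M).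

(* The profinite completion of (N,+): free profinite monoid on one     *)
(* generator, modelled as unary implicit operations on finite monoids  *)
(* (natural families alpha_M : M -> M, i.e. m |-> m^alpha).            *)

Record Nhat := NHat {
  nh_fun : forall M : fmon, M -> M;
  nh_nat : forall (M N : fmon) (h : M -> N), fmon_hom h ->
             forall m, h (nh_fun m) = nh_fun (h m) }.

Definition nh_nonnat (a : Nhat) : Prop :=
  forall n : nat, exists (M : fmon) (m : M), nh_fun a m <> mpow m n.

Definition nh_is_omega_minus_one (a : Nhat) : Prop :=
  forall (M : fmon) (m : M), nh_fun a m = mpow m ((#|M|.+1)`!).-1.

Definition op1 (S : fsg) (a b : option S) : option S :=
  match a, b with
  | None, _ => b
  | _, None => a
  | Some x, Some y => Some (fsg_op x y)
  end.

Lemma op1_assoc (S : fsg) : associative (@op1 S).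
Proof. by case=> [x|] [y|] [z|] //=; rewrite fsg_assoc. Qed.
Lemma op1_mul1 (S : fsg) : left_id None (@op1 S).
Proof. by case. Qed.
Lemma op1_mulr1 (S : fsg) : right_id None (@op1 S).
Proof. by case. Qed.

Definition S1 (S : fsg) : fmon :=
  @FMon (option S) (@op1 S) None (@op1_assoc S) (@op1_mul1 S) (@op1_mulr1 S).

(* x ^ alpha in a finite semigroup S, computed in S^1
   (for non-natural alpha the value always lies in S) *)
Definition pow_val (a : Nhat) (S : fsg) (x : S) : S :=
  match @nh_fun a (S1 S) (Some x) with Some y => y | None => x end.

(* The free profinite semigroup on X, modelled as X-ary implicit       *)
(* operations on finite semigroups                                     *)

Record io (X : Type) := IO {
  io_fun : forall S : fsg, (X -> S) -> S;
  io_nat : forall (S T : fsg) (h : S -> T), fsg_hom h ->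
             forall phi, h (io_fun phi) = io_fun (h \o phi) }.

Section IOops.
Variable X : Type.

Lemma io_letter_nat (x : X) (S T : fsg) (h : S -> T) :
  fsg_hom h -> forall phi : X -> S, h (phi x) = (h \o phi) x.
Proof. by []. Qed.

Definition io_letter (x : X) : io X :=
  @IO X (fun S phi => phi x) (fun S T h hh phi => @io_letter_nat x S T h hh phi).

Lemma io_mul_nat (f g : io X) (S T : fsg) (h : S -> T) :
  fsg_hom h -> forall phi : X -> S,
  h (fsg_op (io_fun f phi) (io_fun g phi)) =
  fsg_op (io_fun f (h \o phi)) (io_fun g (h \o phi)).
Proof. by move=> hh phi; rewrite hh (io_nat f hh) (io_nat g hh). Qed.

Definition io_mul (f g : io X) : io X :=
  @IO X (fun S phi => fsg_op (io_fun f phi) (io_fun g phi))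
        (fun S T h hh phi => @io_mul_nat f g S T h hh phi).

Lemma S1_hom (S T : fsg) (h : S -> T) : fsg_hom h ->
  @fmon_hom (S1 S) (S1 T) (omap h).
Proof. by move=> hh; split=> // [[x|] [y|]] //=; rewrite hh. Qed.

Lemma io_pow_nat (a : Nhat) (f : io X) (S T : fsg) (h : S -> T) :
  fsg_hom h -> forall phi : X -> S,
  h (pow_val a (io_fun f phi)) = pow_val a (io_fun f (h \o phi)).
Proof.
move=> hh phi; rewrite -(io_nat f hh) /pow_val.
have := @nh_nat a (S1 S) (S1 T) (omap h) (S1_hom hh) (Some (io_fun f phi)).
move=> E; rewrite -E.
by case: (@nh_fun a (S1 S) (Some (io_fun f phi))).
Qed.

Definition io_pow (a : Nhat) (f : io X) : io X :=
  @IO X (fun S phi => pow_val a (io_fun f phi))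
        (fun S T h hh phi => @io_pow_nat a f S T h hh phi).

(* the nonempty word x :: s of X^+ as an element of the free profinite semigroup *)
Fixpoint io_word (x : X) (s : seq X) : io X :=
  match s with
  | [::] => io_letter x
  | y :: s' => io_mul (io_letter x) (io_word y s')
  end.

(* Omega^sigma_X S: the subalgebra generated by X under multiplication and
   the powers alpha with sig alpha *)
Inductive in_sigma (sig : Nhat -> Prop) : io X -> Prop :=
  | in_sigma_letter x : in_sigma sig (io_letter x)
  | in_sigma_mul f g : in_sigma sig f -> in_sigma sig g -> in_sigma sig (io_mul f g)
  | in_sigma_pow a f : sig a -> in_sigma sig f -> in_sigma sig (io_pow a f).

(* Topology: the initial topology for the evaluation maps
   f |-> f_S(phi) into finite discrete semigroups.  A basic neighbourhood of
   f is given by a finite list N of pairs (S, phi); g lies in it iff g agrees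
   with f at every pair of N. *)
Fixpoint agree (f g : io X) (N : seq {S : fsg & X -> S}) : Prop :=
  match N with
  | [::] => True
  | p :: N' => io_fun f (projT2 p) = io_fun g (projT2 p) /\ agree f g N'
  end.

Definition closure_in (P A : io X -> Prop) (f : io X) : Prop :=
  P f /\ forall N, exists g, A g /\ agree g f N.

Definition plus_lang (K : seq X -> Prop) : Prop := forall w, K w -> w <> [::].

Definition cat_lang (K L : seq X -> Prop) : seq X -> Prop :=
  fun w => exists u v, K u /\ L v /\ w = u ++ v.

Definition lang_img (K : seq X -> Prop) : io X -> Prop :=
  fun f => exists x s, K (x :: s) /\ f = io_word x s.

Definition set_mul (A B : io X -> Prop) : io X -> Prop :=
  fun f => exists g h, A g /\ B h /\ f = io_mul g h.

Inductive rexp :=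
  | RVoid | REps | RLit of X | RUnion of rexp & rexp | RCat of rexp & rexp
  | RStar of rexp.

Inductive rmatch : rexp -> seq X -> Prop :=
  | rm_eps : rmatch REps [::]
  | rm_lit x : rmatch (RLit x) [:: x]
  | rm_unionl e f w : rmatch e w -> rmatch (RUnion e f) w
  | rm_unionr e f w : rmatch f w -> rmatch (RUnion e f) w
  | rm_cat e f u v : rmatch e u -> rmatch f v -> rmatch (RCat e f) (u ++ v)
  | rm_star0 e : rmatch (RStar e) [::]
  | rm_starS e u v : rmatch e u -> rmatch (RStar e) v -> rmatch (RStar e) (u ++ v).

Definition rational (K : seq X -> Prop) : Prop :=
  exists e, forall w, K w <-> rmatch e w.

End IOops.

From mathcomp Require Import all_boot zify boolp.
Set Implicit Arguments. Unset Strict Implicit. Unset Printing Implicit Defensive.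

(* A sigma-term takes, in each finite semigroup, the value of some word, since a
   non-natural power x^alpha is there a power x^k with k as large as we like.
   Hence if a rational language K is recognized by (S, phi, P), the closure of K
   in Omega^sigma consists of the sigma-terms f with P(f(phi)), and the product
   of the closures of K and L lies in the closure of KL.
   Conversely, evaluate f in the "cut" semigroup over recognizers of K and L,
   which records the values of all factorizations of a word into two nonempty
   factors: a word uv approximating f with u in K and v in L yields a cut
   (u(phi), v(phi)) of f.  By induction on sigma-terms every cut of f comes from
   a factorization f = gh with g, h in Omega^sigma.  In a power g^alpha, which
   is g^(k+1) for a large k in the finite semigroup, the cut falls inside one
   factor g = g1 g2 or between two factors, and g^alpha splits as
   (g^i g1) (g2 g^alpha (g^(omega-1))^(i+1)) or symmetrically: this is where
   the (omega-1)-power is needed. *)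

Section MonoidPowers.
Variable M : fmon.
Implicit Types (m : M) (n i j : nat).

Lemma mpowS m n : mpow m n.+1 = fmon_op m (mpow m n).
Proof. by []. Qed.

Lemma mpow1 m : mpow m 1 = m.
Proof. exact: fmon_mulr1. Qed.

Lemma mpowD m i j : mpow m (i + j) = fmon_op (mpow m i) (mpow m j).
Proof.
elim: i => [|i IH]; first by rewrite fmon_mul1.
by rewrite addSn !mpowS IH fmon_assoc.
Qed.

Lemma mpowSr m n : fmon_op (mpow m n) m = mpow m n.+1.
Proof. by rewrite -addn1 mpowD mpow1. Qed.

Lemma mpowM m i j : mpow (mpow m i) j = mpow m (i * j).
Proof.
elim: j => [|j IH]; first by rewrite muln0.
by rewrite mpowS IH -mpowD mulnS.
Qed.

Lemma mpow_periodic m i d : mpow m (i + d) = mpow m i ->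
  forall n t, i <= n -> mpow m (n + t * d) = mpow m n.
Proof.
move=> Ed n t le_in; elim: t => [|t IH]; first by rewrite addn0.
have le_i : i <= n + t * d by exact: leq_trans le_in (leq_addr _ _).
have -> : n + t.+1 * d = (n + t * d - i) + (i + d).
  by rewrite mulSnr addnA [RHS]addnA subnK.
by rewrite mpowD Ed -mpowD subnK.
Qed.

Lemma mpow_repeat m :
  exists i d, [/\ 0 < d, i + d <= #|M| & mpow m (i + d) = mpow m i].
Proof.
pose f (i : 'I_#|M|.+1) := mpow m i.
have /injectivePn [[i lt_i] [[i' lt_i'] neq_ii' Ef]] : ~~ injectiveb f.
  by apply/injectiveP => /leq_card; rewrite card_ord ltnn.
have {}neq_ii' : i != i' by [].
have {f}Ef : mpow m i = mpow m i' := Ef.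
wlog lt_ii' : i i' lt_i lt_i' Ef {neq_ii'} / i < i'.
  move=> W; move: neq_ii'; rewrite neq_ltn => /orP [lt_ii'|lt_i'i].
  - exact: W i i' lt_i lt_i' Ef lt_ii'.
  - exact: W i' i lt_i' lt_i (esym Ef) lt_i'i.
exists i, (i' - i); rewrite subn_gt0 subnKC; last exact: ltnW.
split; [exact: lt_ii' | exact: lt_i' | exact: esym Ef].
Qed.

Lemma mpow_fact_period m j r : #|M| <= j ->
  mpow m (j + r * (#|M|.+1)`!) = mpow m j.
Proof.
move=> le_Mj; have [i [d [d_gt0 le_idM Ed]]] := mpow_repeat m.
have /dvdnP [q ->] : d %| (#|M|.+1)`!.
  apply: dvdn_fact; rewrite d_gt0; apply: leqW.
  exact: leq_trans (leq_addl i d) le_idM.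
rewrite mulnA (mpow_periodic Ed) //.
exact: leq_trans (leq_addr d i) (leq_trans le_idM le_Mj).
Qed.

End MonoidPowers.

Lemma fmon_hom_mpow (M N : fmon) (h : M -> N) : fmon_hom h ->
  forall m n, h (mpow m n) = mpow (h m) n.
Proof. by case=> h1 hM m; elim=> [|n IH] //=; rewrite hM IH. Qed.

Lemma mpow_eq_periodic (M : fmon) (m : M) i j : i < j -> mpow m i = mpow m j ->
  forall n, i <= n -> mpow m (n + (j - i)) = mpow m n.
Proof.
move=> lt_ij Eij n le_in.
have Ei : mpow m (i + (j - i)) = mpow m i.
  by rewrite subnKC; [exact: esym Eij | exact: ltnW].
by have := mpow_periodic Ei 1 le_in; rewrite mul1n.
Qed.

Section Submonoid.
Variables (M : fmon) (P : pred M).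
Hypotheses (P1 : P (fmon_one M)) (PM : forall x y, P x -> P y -> P (fmon_op x y)).

Definition sub_one : {x | P x} := exist _ (fmon_one M) P1.

Definition sub_op (x y : {x | P x}) : {x | P x} :=
  exist _ (fmon_op (val x) (val y)) (PM (valP x) (valP y)).

Lemma sub_opA : associative sub_op.
Proof. by move=> x y z; apply: val_inj; rewrite /= fmon_assoc. Qed.
Lemma sub_op1 : left_id sub_one sub_op.
Proof. by move=> x; apply: val_inj; rewrite /= fmon_mul1. Qed.
Lemma sub_opr1 : right_id sub_one sub_op.
Proof. by move=> x; apply: val_inj; rewrite /= fmon_mulr1. Qed.

Definition sub_fmon : fmon := FMon sub_opA sub_op1 sub_opr1.

Lemma nh_fun_closed (a : Nhat) m : P m -> P (nh_fun a m).
Proof.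
move=> Pm; have val_hom : @fmon_hom sub_fmon M val by [].
by have /= <- := nh_nat a val_hom (exist _ m Pm); exact: valP.
Qed.

End Submonoid.

Lemma nh_fun_mpow (a : Nhat) (M : fmon) (m : M) : exists j, nh_fun a m = mpow m j.
Proof.
pose P : pred M := fun y => `[< exists n, y = mpow m n >].
have P1 : P (fmon_one M) by apply/asboolP; exists 0.
have PM x y : P x -> P y -> P (fmon_op x y).
  by move=> /asboolP [i ->] /asboolP [j ->]; apply/asboolP; exists (i + j); rewrite mpowD.
have Pm : P m by apply/asboolP; exists 1; rewrite mpow1.
exact/asboolP/(nh_fun_closed P1 PM).
Qed.

Section ProductMonoid.
Variables M N : fmon.

Definition prod_op (x y : M * N) := (fmon_op x.1 y.1, fmon_op x.2 y.2).

Lemma prod_opA : associative prod_op.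
Proof. by move=> x y z; rewrite /prod_op /= !fmon_assoc. Qed.
Lemma prod_op1 : left_id (fmon_one M, fmon_one N) prod_op.
Proof. by case=> x1 x2; rewrite /prod_op /= !fmon_mul1. Qed.
Lemma prod_opr1 : right_id (fmon_one M, fmon_one N) prod_op.
Proof. by case=> x1 x2; rewrite /prod_op /= !fmon_mulr1. Qed.

Definition prod_fmon : fmon := FMon prod_opA prod_op1 prod_opr1.

Lemma fst_fmon_hom : @fmon_hom prod_fmon M fst. Proof. by []. Qed.
Lemma snd_fmon_hom : @fmon_hom prod_fmon N snd. Proof. by []. Qed.

End ProductMonoid.

(* Without a period at j, alpha would act as the exponent j on the first
   component of a product M x M', hence on the whole of it, contradicting
   non-naturality witnessed in M'. *)
Lemma nh_nonnat_periodic (a : Nhat) (M : fmon) (m : M) j : nh_nonnat a ->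
  nh_fun a m = mpow m j -> exists2 d, 0 < d & mpow m (j + d) = mpow m j.
Proof.
move=> nn Ej; apply: contrapT => noper; have [M' [m' neq_a_j]] := nn j.
have [s Es] := nh_fun_mpow a (M := prod_fmon M M') (m, m').
have E1 := nh_nat a (@fst_fmon_hom M M') (m, m').
have E2 := nh_nat a (@snd_fmon_hom M M') (m, m').
rewrite Es (fmon_hom_mpow (@fst_fmon_hom M M')) /= in E1.
rewrite Es (fmon_hom_mpow (@snd_fmon_hom M M')) /= in E2.
have Esj : mpow m s = mpow m j by rewrite E1.
suff eq_sj : s = j by apply: neq_a_j; rewrite -E2 eq_sj.
case: (ltngtP s j) => [lt_sj|lt_js|//]; case: noper.
- exists (j - s); first by rewrite subn_gt0.
  exact: mpow_eq_periodic lt_sj Esj j (ltnW lt_sj).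
- exists (s - j); first by rewrite subn_gt0.
  by rewrite subnKC; [exact: Esj | exact: ltnW].
Qed.

Lemma nh_nonnat_mpow_ge (a : Nhat) (M : fmon) (m : M) B : nh_nonnat a ->
  exists2 k, B <= k & nh_fun a m = mpow m k.
Proof.
move=> nn; have [j Ej] := nh_fun_mpow a m.
have [d d_gt0 Ed] := nh_nonnat_periodic nn Ej.
exists (j + B * d); last by rewrite Ej (mpow_periodic Ed).
by apply: leq_trans (leq_addl _ _); rewrite leq_pmulr.
Qed.

Lemma io_ext (X : Type) (f g : io X) :
  (forall (S : fsg) (phi : X -> S), io_fun f phi = io_fun g phi) -> f = g.
Proof.
case: f g => f f_nat [g g_nat] /= Efg.
have eq_fg : f = g.
  by apply: functional_extensionality_dep => S; apply: funext => phi; exact: Efg.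
by subst g; congr IO; exact: Prop_irrelevance.
Qed.

Section ProductSemigroup.
Variables S T : fsg.

Definition prod_sop (x y : S * T) := (fsg_op x.1 y.1, fsg_op x.2 y.2).

Lemma prod_sopA : associative prod_sop.
Proof. by move=> x y z; rewrite /prod_sop /= !fsg_assoc. Qed.

Definition prod_fsg : fsg := FSG prod_sopA.

Lemma fst_fsg_hom : @fsg_hom prod_fsg S fst. Proof. by []. Qed.
Lemma snd_fsg_hom : @fsg_hom prod_fsg T snd. Proof. by []. Qed.

Lemma io_fun_fst X (f : io X) (phi : X -> S) (psi : X -> T) :
  (io_fun f (S := prod_fsg) (fun x => (phi x, psi x))).1 = io_fun f phi.
Proof. exact: (io_nat f fst_fsg_hom). Qed.

Lemma io_fun_snd X (f : io X) (phi : X -> S) (psi : X -> T) :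
  (io_fun f (S := prod_fsg) (fun x => (phi x, psi x))).2 = io_fun f psi.
Proof. exact: (io_nat f snd_fsg_hom). Qed.

End ProductSemigroup.

Definition unit_fsg : fsg := @FSG unit (fun _ _ => tt) (fun _ _ _ => erefl).

(* Values are taken in S^1 so that the empty word has a value, namely None. *)
Section WordValue.
Variables (X : Type) (S : fsg) (phi : X -> S).

Definition wval (w : seq X) : S1 S :=
  if w is x :: s then Some (io_fun (io_word x s) phi) else None.

Definition ev (f : io X) : S1 S := Some (io_fun f phi).

Lemma wval_cons x w : wval (x :: w) = @fmon_op (S1 S) (Some (phi x)) (wval w).
Proof. by case: w. Qed.

Lemma wval_cat u v : wval (u ++ v) = @fmon_op (S1 S) (wval u) (wval v).
Proof.
elim: u => [|x u IH]; first by [].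
by rewrite cat_cons !wval_cons IH fmon_assoc.
Qed.

Lemma wval_flatten_nseq n w : wval (flatten (nseq n w)) = mpow (wval w) n.
Proof. by elim: n => [|n IH] //=; rewrite wval_cat IH. Qed.

Lemma ev_mul f g : ev (io_mul f g) = @fmon_op (S1 S) (ev f) (ev g).
Proof. by []. Qed.

Lemma ev_pow (a : Nhat) f : nh_nonnat a -> ev (io_pow a f) = nh_fun a (ev f).
Proof.
move=> nn; have [[|k] k_gt0 Ek] := nh_nonnat_mpow_ge (ev f) 1 nn; first by [].
rewrite /ev /= /pow_val Ek mpowS.
by case: (mpow (ev f) k).
Qed.

End WordValue.

Lemma ev_in_sigma_wval X (sig : Nhat -> Prop)
  (sig_nonnat : forall a, sig a -> nh_nonnat a) (f : io X) : in_sigma sig f ->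
  forall (S : fsg) (phi : X -> S), exists w, ev phi f = wval phi w.
Proof.
elim=> [x|g h _ IHg _ IHh|a g sig_a _ IHg] S phi.
- by exists [:: x].
- have [u Eu] := IHg S phi; have [v Ev] := IHh S phi.
  by exists (u ++ v); rewrite ev_mul wval_cat Eu Ev.
- have [w Ew] := IHg S phi; have [j Ej] := nh_fun_mpow a (ev phi g).
  exists (flatten (nseq j w)).
  by rewrite (ev_pow _ _ (sig_nonnat _ sig_a)) Ej Ew wval_flatten_nseq.
Qed.

(* All evaluations in a basic neighbourhood are detected at once by a single
   evaluation in the product of the semigroups involved. *)
Fixpoint nbhd_fsg X (N : seq {S : fsg & X -> S}) : fsg :=
  if N is p :: N' then prod_fsg (projT1 p) (nbhd_fsg N') else unit_fsg.

Fixpoint nbhd_map X (N : seq {S : fsg & X -> S}) : X -> nbhd_fsg N :=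
  if N is p :: N' then fun x => (projT2 p x, nbhd_map N' x) else fun _ => tt.

Lemma agree_nbhd_map X (f g : io X) N :
  io_fun f (nbhd_map N) = io_fun g (nbhd_map N) -> agree f g N.
Proof.
elim: N => [//|[S phi] N IH] /= Efg; split.
- by rewrite -(io_fun_fst f phi (nbhd_map N)) -(io_fun_fst g phi (nbhd_map N)) Efg.
- apply: IH.
  by rewrite -(io_fun_snd f phi (nbhd_map N)) -(io_fun_snd g phi (nbhd_map N)) Efg.
Qed.

Section RecognizedClosure.
Variables (X : Type) (sig : Nhat -> Prop) (sig_nonnat : forall a, sig a -> nh_nonnat a).
Variables (R : fsg) (phi : X -> R) (P : pred (S1 R)) (K : seq X -> Prop).
Hypothesis K_rec : forall w, K w <-> P (wval phi w).

Lemma in_sigma_closure_recognized g : in_sigma sig g -> P (ev phi g) ->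
  closure_in (in_sigma sig) (lang_img K) g.
Proof.
move=> sig_g Pg; split=> // N.
pose Phi x : prod_fsg R (nbhd_fsg N) := (phi x, nbhd_map N x).
have [[|x s] //= [Ew]] := ev_in_sigma_wval sig_nonnat sig_g Phi.
exists (io_word x s); split.
- exists x, s; split=> //; apply/K_rec.
  by rewrite /= -(io_fun_fst _ phi (nbhd_map N)) -Ew io_fun_fst.
- by apply: agree_nbhd_map; rewrite -(io_fun_snd _ phi) -Ew io_fun_snd.
Qed.

End RecognizedClosure.

(* The pair (m, C) records the value m of a word together with the set C of
   values (prefix, suffix) of all its factorizations into two nonempty words. *)
Section CutSemigroup.
Variable M : fsg.

Definition cut_op (x y : M * {set M * M}) : M * {set M * M} :=
  (fsg_op x.1 y.1,
   [set p | [exists q in x.2, p == (q.1, fsg_op q.2 y.1)]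
         || [exists q in y.2, p == (fsg_op x.1 q.1, q.2)] || (p == (x.1, y.1))]).

Lemma mem_cut_op x y p : p \in (cut_op x y).2 <->
  [\/ exists2 q, q \in x.2 & p = (q.1, fsg_op q.2 y.1),
      exists2 q, q \in y.2 & p = (fsg_op x.1 q.1, q.2) | p = (x.1, y.1)].
Proof.
rewrite inE; split.
- case/orP => [/orP [] /exists_inP [q q_in /eqP ->]|/eqP ->].
  + by apply: Or31; exists q.
  + by apply: Or32; exists q.
  + exact: Or33.
- case=> [[q q_in ->]|[q q_in ->]|->]; apply/orP.
  + by left; apply/orP; left; apply/exists_inP; exists q.
  + by left; apply/orP; right; apply/exists_inP; exists q.
  + by right.
Qed.

Lemma cut_opA : associative cut_op.
Proof.
move=> x y z; congr pair; first by rewrite /= fsg_assoc.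
apply/setP => p; apply/idP/idP => /mem_cut_op H; apply/mem_cut_op.
- case: H => [[q q_in ->]|[q q_in ->]| ->].
  + apply: Or31; exists (q.1, fsg_op q.2 y.1); last by rewrite /= fsg_assoc.
    by apply/mem_cut_op; apply: Or31; exists q.
  + case/mem_cut_op: q_in => [[r r_in ->]|[r r_in ->]| ->].
    * apply: Or31; exists (fsg_op x.1 r.1, r.2) => //.
      by apply/mem_cut_op; apply: Or32; exists r.
    * by apply: Or32; exists r; rewrite //= fsg_assoc.
    * exact: Or33.
  + by apply: Or31; exists (x.1, y.1) => //; apply/mem_cut_op; apply: Or33.
- case: H => [[q q_in ->]|[q q_in ->]| ->].
  + case/mem_cut_op: q_in => [[r r_in ->]|[r r_in ->]| ->].
    * by apply: Or31; exists r; rewrite //= fsg_assoc.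
    * apply: Or32; exists (r.1, fsg_op r.2 z.1) => //.
      by apply/mem_cut_op; apply: Or31; exists r.
    * exact: Or33.
  + apply: Or32; exists (fsg_op y.1 q.1, q.2); last by rewrite /= fsg_assoc.
    by apply/mem_cut_op; apply: Or32; exists q.
  + by apply: Or32; exists (y.1, z.1) => //; apply/mem_cut_op; apply: Or33.
Qed.

Definition cut_fsg : fsg := FSG cut_opA.

Lemma fst_cut_hom : @fsg_hom cut_fsg M fst. Proof. by []. Qed.

Definition cut_map X (phi : X -> M) : X -> cut_fsg := fun x => (phi x, set0).

Lemma io_fun_cut_fst X (phi : X -> M) (f : io X) :
  (io_fun f (cut_map phi)).1 = io_fun f phi.
Proof. exact: (io_nat f fst_cut_hom). Qed.

Lemma mem_cut_word X (phi : X -> M) x s a b :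
  (a, b) \in (io_fun (io_word x s) (cut_map phi)).2 <->
  exists u v, [/\ x :: s = u ++ v, wval phi u = Some a & wval phi v = Some b].
Proof.
elim: s x a b => [|y s IH] x a b.
  by rewrite inE; split=> // -[[|x1 [|y1 u]] [[|x2 v] [Euv Ea Eb]]].
have -> : io_fun (io_word x (y :: s)) (cut_map phi) =
  cut_op (phi x, set0) (io_fun (io_word y s) (cut_map phi)) by [].
rewrite mem_cut_op; split.
- case=> [[q]|[[q1 q2] /IH [u [v [Euv Ea Eb]]] [-> ->]]|[-> ->]]; first by rewrite inE.
  + exists (x :: u), v; split; [by rewrite Euv | by rewrite wval_cons Ea | by []].
  + by exists [:: x], (y :: s); rewrite io_fun_cut_fst.
- case=> -[|x1 u] [v [Euv Ea Eb]]; first by [].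
  move: Ea; case: v Euv Eb => [|x2 v] [<- Euv] // [<-] [<-].
  case: u Euv => [|x1' u] /= [Ey Es].
  + by apply: Or33; rewrite io_fun_cut_fst Ey Es.
  + apply: Or32; exists (io_fun (io_word x1' u) phi, io_fun (io_word x2 v) phi) => //.
    by apply/IH; exists (x1' :: u), (x2 :: v); rewrite Ey Es.
Qed.

End CutSemigroup.

Section FactorialCancellation.
Variables (M : fmon) (y : M) (K : nat).
Hypothesis le_MK : #|M| <= K.
Local Notation c := (#|M|.+1)`!.

(* y^(c-1) acts as an inverse of y on the powers y^K with K >= #|M|. *)
Lemma mpow_fact_cancel i : mpow y (K + c.-1 * i + i) = mpow y K.
Proof.
rewrite -addnA -mulSnr prednK ?fact_gt0 // mulnC; exact: mpow_fact_period.
Qed.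

Lemma mpow_fact_cancel_l i :
  fmon_op (mpow y i) (fmon_op (mpow y K) (mpow (mpow y c.-1) i)) = mpow y K.
Proof. by rewrite mpowM -!mpowD -[RHS](mpow_fact_cancel i); congr mpow; lia. Qed.

Lemma mpow_fact_cancel_r j :
  fmon_op (fmon_op (mpow y K) (mpow (mpow y c.-1) j)) (mpow y j) = mpow y K.
Proof. by rewrite mpowM -!mpowD -[RHS](mpow_fact_cancel j); congr mpow; lia. Qed.

Lemma mpow_fact_cancel_exp i :
  fmon_op (mpow y (i + K)) (mpow (mpow y c.-1) i) = mpow y K.
Proof. by rewrite mpowM -mpowD -[RHS](mpow_fact_cancel i); congr mpow; lia. Qed.

End FactorialCancellation.

Lemma mpow_Some (S : fsg) (x : S) n : exists z, mpow (M := S1 S) (Some x) n.+1 = Some z.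
Proof. by rewrite mpowS; case: (mpow _ n) => [z|]; [exists (fsg_op x z)|exists x]. Qed.

Lemma mem_cut_mpow (M : fsg) (t u : cut_fsg M) n a b :
  mpow (M := S1 (cut_fsg M)) (Some t) n.+1 = Some u -> (a, b) \in u.2 ->
  (exists i j q, [/\ i + j = n, q \in t.2,
     Some a = @fmon_op (S1 M) (mpow (M := S1 M) (Some t.1) i) (Some q.1) &
     Some b = @fmon_op (S1 M) (Some q.2) (mpow (M := S1 M) (Some t.1) j)]) \/
  (exists i j, [/\ 0 < i, 0 < j, i + j = n.+1,
     Some a = mpow (M := S1 M) (Some t.1) i & Some b = mpow (M := S1 M) (Some t.1) j]).
Proof.
elim: n u a b => [|n IH] u a b.
  by rewrite mpow1 => -[<-] ab_in; left; exists 0, 0, (a, b).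
have [u' Eu'] := mpow_Some t n.
have Eu'1 : Some u'.1 = mpow (M := S1 M) (Some t.1) n.+1.
  by have := fmon_hom_mpow (S1_hom (@fst_cut_hom M)) (Some t) n.+1; rewrite Eu'.
rewrite mpowS Eu' => -[<-] /mem_cut_op [[q q_in [-> ->]]|[[q1 q2] q_in [-> ->]]|[-> ->]].
- by left; exists 0, n.+1, q; split; rewrite -?Eu'1.
- have [[i [j [q' [Eij q'_in Ea Eb]]]]|[i [j [i_gt0 j_gt0 Eij Ea Eb]]]] :=
    IH _ _ _ Eu' q_in.
  + left; exists i.+1, j, q'; split=> //; first by rewrite addSn Eij.
    by rewrite mpowS -fmon_assoc -Ea.
  + right; exists i.+1, j; split=> //; first by rewrite addSn Eij.
    by rewrite mpowS -Ea.
- by right; exists 1, n.+1; split; rewrite -?Eu'1.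
Qed.

Section Factorization.
Variable X : Type.
Implicit Types (f g h : io X).

Definition io_lpow g i h := iter i (io_mul g) h.
Definition io_rpow h g j := iter j (fun k => io_mul k g) h.

Lemma in_sigma_lpow sig g i h : in_sigma sig g -> in_sigma sig h ->
  in_sigma sig (io_lpow g i h).
Proof. by move=> sig_g sig_h; elim: i => [|i IH] //=; constructor. Qed.

Lemma in_sigma_rpow sig h g j : in_sigma sig h -> in_sigma sig g ->
  in_sigma sig (io_rpow h g j).
Proof. by move=> sig_h sig_g; elim: j => [|j IH] //=; constructor. Qed.

Lemma io_ext_ev f g : (forall (S : fsg) (psi : X -> S), ev psi f = ev psi g) -> f = g.
Proof. by move=> Efg; apply: io_ext => S psi; case: (Efg S psi). Qed.

Section Values.
Variables (S : fsg) (psi : X -> S).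

Lemma ev_lpow g i h :
  ev psi (io_lpow g i h) = @fmon_op (S1 S) (mpow (ev psi g) i) (ev psi h).
Proof. by elim: i => [|i IH] //=; rewrite ev_mul IH fmon_assoc. Qed.

Lemma ev_lpow_pred g i : 0 < i -> ev psi (io_lpow g i.-1 g) = mpow (ev psi g) i.
Proof. by case: i => // i _; rewrite ev_lpow mpowSr. Qed.

Lemma ev_rpow h g j :
  ev psi (io_rpow h g j) = @fmon_op (S1 S) (ev psi h) (mpow (ev psi g) j).
Proof.
elim: j => [|j IH]; first by rewrite fmon_mulr1.
by rewrite /= ev_mul IH -fmon_assoc mpowSr.
Qed.

Lemma ev_cut_fst (M : fsg) (phi : X -> M) f :
  ev phi f = omap fst (ev (cut_map phi) f).
Proof. by rewrite /ev /= io_fun_cut_fst. Qed.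

End Values.

Variables (sig : Nhat -> Prop) (sig_nonnat : forall a, sig a -> nh_nonnat a).
Variables (w : Nhat) (sig_w : sig w) (w_omega1 : nh_is_omega_minus_one w).

(* g^(alpha - i), realized as g^alpha (g^(omega-1))^i *)
Definition io_powsub (alpha : Nhat) g i := io_rpow (io_pow alpha g) (io_pow w g) i.

Lemma in_sigma_powsub alpha g i : sig alpha -> in_sigma sig g ->
  in_sigma sig (io_powsub alpha g i).
Proof. by move=> sig_alpha sig_g; apply: in_sigma_rpow; constructor. Qed.

Section PowsubValues.
Variables (S : fsg) (psi : X -> S) (alpha : Nhat) (g : io X).
Hypothesis alpha_nonnat : nh_nonnat alpha.
Local Notation y := (ev psi g).

Lemma ev_powsub i : ev psi (io_powsub alpha g i) =
  fmon_op (nh_fun alpha y) (mpow (mpow y (#|S1 S|.+1)`!.-1) i).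
Proof.
by rewrite ev_rpow (ev_pow _ _ alpha_nonnat) (ev_pow _ _ (sig_nonnat sig_w)) w_omega1.
Qed.

Lemma powsub_cancel_l i :
  fmon_op (mpow y i) (ev psi (io_powsub alpha g i)) = ev psi (io_pow alpha g).
Proof.
have [K le_K EK] := nh_nonnat_mpow_ge y #|S1 S| alpha_nonnat.
by rewrite ev_powsub (ev_pow _ _ alpha_nonnat) EK mpow_fact_cancel_l.
Qed.

Lemma powsub_cancel_r j :
  fmon_op (ev psi (io_powsub alpha g j)) (mpow y j) = ev psi (io_pow alpha g).
Proof.
have [K le_K EK] := nh_nonnat_mpow_ge y #|S1 S| alpha_nonnat.
by rewrite ev_powsub (ev_pow _ _ alpha_nonnat) EK mpow_fact_cancel_r.
Qed.

Lemma ev_powsub_exp i j : nh_fun alpha y = mpow y (i + j) -> #|S1 S| <= j ->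
  ev psi (io_powsub alpha g i) = mpow y j.
Proof. by move=> Eij le_j; rewrite ev_powsub Eij mpow_fact_cancel_exp. Qed.

End PowsubValues.

Variables (M : fsg) (phi : X -> M).

Definition cut_factorable f := forall a b, (a, b) \in (io_fun f (cut_map phi)).2 ->
  exists g h, [/\ in_sigma sig g, in_sigma sig h, f = io_mul g h,
                  ev phi g = Some a & ev phi h = Some b].

Lemma cut_factorable_mul g h : in_sigma sig g -> in_sigma sig h ->
  cut_factorable g -> cut_factorable h -> cut_factorable (io_mul g h).
Proof.
move=> sig_g sig_h fact_g fact_h a b.
case/mem_cut_op => [[[q1 q2] q_in [-> ->]]|[[q1 q2] q_in [-> ->]]|[-> ->]].
- have [g1 [g2 [sig_g1 sig_g2 -> Eg1 Eg2]]] := fact_g _ _ q_in.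
  exists g1, (io_mul g2 h); split=> //; first by constructor.
  + by apply: io_ext_ev => S psi; rewrite !ev_mul fmon_assoc.
  + by rewrite ev_mul Eg2 /ev io_fun_cut_fst.
- have [h1 [h2 [sig_h1 sig_h2 -> Eh1 Eh2]]] := fact_h _ _ q_in.
  exists (io_mul g h1), h2; split=> //; first by constructor.
  + by apply: io_ext_ev => S psi; rewrite !ev_mul fmon_assoc.
  + by rewrite ev_mul Eh1 /ev io_fun_cut_fst.
- by exists g, h; rewrite /ev !io_fun_cut_fst.
Qed.

Section PowerFactorization.
Variables (alpha : Nhat) (g : io X) (k : nat).
Hypotheses (sig_alpha : sig alpha) (sig_g : in_sigma sig g).
Hypotheses (Ek : nh_fun alpha (ev phi g) = mpow (ev phi g) k.+1)
           (le_k : #|S1 M| + #|S1 M| <= k).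
Local Notation y := (ev phi g).
Let alpha_nonnat := sig_nonnat sig_alpha.

Lemma factor_pow_inside g1 g2 i j a b : in_sigma sig g1 -> in_sigma sig g2 ->
  g = io_mul g1 g2 -> i + j = k ->
  Some a = fmon_op (mpow y i) (ev phi g1) -> Some b = fmon_op (ev phi g2) (mpow y j) ->
  exists g' h', [/\ in_sigma sig g', in_sigma sig h', io_pow alpha g = io_mul g' h',
                    ev phi g' = Some a & ev phi h' = Some b].
Proof.
move=> sig_g1 sig_g2 Eg Eij Ea Eb.
have Ey (S : fsg) (psi : X -> S) : ev psi g = fmon_op (ev psi g1) (ev psi g2).
  by rewrite Eg.
have [le_i|le_j] : #|S1 M| <= i \/ #|S1 M| <= j by lia.
- exists (io_mul (io_powsub alpha g j.+1) g1), (io_rpow g2 g j); split.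
  + by constructor; [apply: in_sigma_powsub|].
  + exact: in_sigma_rpow.
  + apply: io_ext_ev => S psi.
    rewrite [RHS]ev_mul [in RHS]ev_mul ev_rpow -(powsub_cancel_r psi g alpha_nonnat j.+1).
    by rewrite mpowS Ey -!fmon_assoc.
  + have Ek' : nh_fun alpha y = mpow y (j.+1 + i) by rewrite Ek; congr mpow; lia.
    by rewrite ev_mul (ev_powsub_exp alpha_nonnat Ek' le_i) Ea.
  + by rewrite ev_rpow Eb.
- exists (io_lpow g i g1), (io_mul g2 (io_powsub alpha g i.+1)); split.
  + exact: in_sigma_lpow.
  + by constructor; [|apply: in_sigma_powsub].
  + apply: io_ext_ev => S psi.
    rewrite [RHS]ev_mul [in RHS]ev_mul ev_lpow -(powsub_cancel_l psi g alpha_nonnat i.+1).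
    by rewrite -mpowSr Ey -!fmon_assoc.
  + by rewrite ev_lpow Ea.
  + have Ek' : nh_fun alpha y = mpow y (i.+1 + j) by rewrite Ek; congr mpow; lia.
    by rewrite ev_mul (ev_powsub_exp alpha_nonnat Ek' le_j) Eb.
Qed.

Lemma factor_pow_between i j a b : 0 < i -> 0 < j -> i + j = k.+1 ->
  Some a = mpow y i -> Some b = mpow y j ->
  exists g' h', [/\ in_sigma sig g', in_sigma sig h', io_pow alpha g = io_mul g' h',
                    ev phi g' = Some a & ev phi h' = Some b].
Proof.
move=> i_gt0 j_gt0 Eij Ea Eb.
have [le_i|le_j] : #|S1 M| <= i \/ #|S1 M| <= j by lia.
- exists (io_powsub alpha g j), (io_lpow g j.-1 g); split.
  + exact: in_sigma_powsub.
  + exact: in_sigma_lpow.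
  + apply: io_ext_ev => S psi.
    by rewrite ev_mul ev_lpow_pred // powsub_cancel_r.
  + have Ek' : nh_fun alpha y = mpow y (j + i) by rewrite Ek -Eij addnC.
    by rewrite (ev_powsub_exp alpha_nonnat Ek' le_i) Ea.
  + by rewrite ev_lpow_pred.
- exists (io_lpow g i.-1 g), (io_powsub alpha g i); split.
  + exact: in_sigma_lpow.
  + exact: in_sigma_powsub.
  + apply: io_ext_ev => S psi.
    by rewrite ev_mul ev_lpow_pred // powsub_cancel_l.
  + by rewrite ev_lpow_pred.
  + have Ek' : nh_fun alpha y = mpow y (i + j) by rewrite Ek -Eij.
    by rewrite (ev_powsub_exp alpha_nonnat Ek' le_j) Eb.
Qed.

End PowerFactorization.

Lemma cut_factorable_pow alpha g : sig alpha -> in_sigma sig g -> cut_factorable g ->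
  cut_factorable (io_pow alpha g).
Proof.
move=> sig_alpha sig_g fact_g a b ab_in; have nn := sig_nonnat sig_alpha.
set t := io_fun g (cut_map phi).
have [[|k] le_k Ek] :=
  nh_nonnat_mpow_ge (Some t : S1 (cut_fsg M)) (#|S1 M| + #|S1 M|).+1 nn; first by [].
have Ecut : mpow (M := S1 (cut_fsg M)) (Some t) k.+1 =
             Some (io_fun (io_pow alpha g) (cut_map phi)).
  by rewrite -Ek -(ev_pow _ _ nn).
have Et : Some t.1 = ev phi g by rewrite /ev /t io_fun_cut_fst.
have Eg : nh_fun alpha (ev phi g) = mpow (ev phi g) k.+1.
  rewrite -(ev_pow _ _ nn) ev_cut_fst (ev_pow _ _ nn) Ek.
  by rewrite (fmon_hom_mpow (S1_hom (@fst_cut_hom M))) -Et.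
have [[i [j [[q1 q2] [Eij q_in Ea Eb]]]]|[i [j [i_gt0 j_gt0 Eij Ea Eb]]]] :=
  mem_cut_mpow Ecut ab_in; rewrite Et in Ea Eb.
- have [g1 [g2 [sig_g1 sig_g2 Eg12 Eq1 Eq2]]] := fact_g _ _ q_in.
  by apply: (factor_pow_inside sig_alpha sig_g Eg le_k sig_g1 sig_g2 Eg12 Eij);
    rewrite ?Eq1 ?Eq2.
- exact: (factor_pow_between sig_alpha sig_g Eg le_k i_gt0 j_gt0 Eij).
Qed.

Lemma in_sigma_cut_factorable f : in_sigma sig f -> cut_factorable f.
Proof.
elim=> [x a b|g h sig_g fact_g sig_h fact_h|alpha g sig_alpha sig_g fact_g].
- by rewrite inE.
- exact: cut_factorable_mul.
- exact: cut_factorable_pow.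
Qed.

End Factorization.

Lemma wval_fst X (S T : fsg) (phi : X -> S) (psi : X -> T) w :
  omap fst (wval (S := prod_fsg S T) (fun x => (phi x, psi x)) w) = wval phi w.
Proof. by case: w => //= x s; rewrite io_fun_fst. Qed.

Lemma wval_snd X (S T : fsg) (phi : X -> S) (psi : X -> T) w :
  omap snd (wval (S := prod_fsg S T) (fun x => (phi x, psi x)) w) = wval psi w.
Proof. by case: w => //= x s; rewrite io_fun_snd. Qed.

Lemma ev_fst X (S T : fsg) (phi : X -> S) (psi : X -> T) f :
  ev phi f = omap fst (ev (S := prod_fsg S T) (fun x => (phi x, psi x)) f).
Proof. by rewrite /ev /= io_fun_fst. Qed.

Lemma ev_snd X (S T : fsg) (phi : X -> S) (psi : X -> T) f :
  ev psi f = omap snd (ev (S := prod_fsg S T) (fun x => (phi x, psi x)) f).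
Proof. by rewrite /ev /= io_fun_snd. Qed.

Lemma wval_cut_fst X (M : fsg) (phi : X -> M) w :
  omap fst (wval (cut_map phi) w) = wval phi w.
Proof. by case: w => //= x s; rewrite io_fun_cut_fst. Qed.

Definition recognizable X (K : seq X -> Prop) :=
  exists (S : fsg) (phi : X -> S) (P : pred (S1 S)), forall w, K w <-> P (wval phi w).

Definition null_fsg : fsg := @FSG bool (fun _ _ => false) (fun _ _ _ => erefl).

Section RationalRecognizable.
Variable X : eqType.
Implicit Types (e f : rexp X).

Lemma recognizable_void : recognizable (rmatch (RVoid X)).
Proof. by exists unit_fsg, (fun _ => tt), pred0 => w; split=> // H; inversion H. Qed.

Lemma recognizable_eps : recognizable (rmatch (REps X)).
Proof.
exists unit_fsg, (fun _ => tt), (fun o => o == None) => w.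
split=> [H|]; first by inversion H.
by case: w => // _; constructor.
Qed.

Lemma recognizable_lit (x0 : X) : recognizable (rmatch (RLit x0)).
Proof.
exists null_fsg, (fun x => x == x0), (fun o => o == Some true) => w.
split=> [H|]; first by inversion H; rewrite /= eqxx.
case: w => [//|x [|y s]] /=.
- by move/eqP => [/eqP ->]; constructor.
- by move/eqP.
Qed.

Lemma recognizable_union e f : recognizable (rmatch e) -> recognizable (rmatch f) ->
  recognizable (rmatch (RUnion e f)).
Proof.
move=> [S [phi [P HP]]] [T [psi [Q HQ]]].
exists (prod_fsg S T), (fun x => (phi x, psi x)),
  (fun o => P (omap fst o) || Q (omap snd o)) => w.
rewrite wval_fst wval_snd; split=> [H|/orP [/HP H|/HQ H]].
- by inversion H; subst; apply/orP; [left; apply/HP|right; apply/HQ].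
- exact: rm_unionl.
- exact: rm_unionr.
Qed.

Lemma rmatch_catP e f w :
  rmatch (RCat e f) w <-> exists u v, [/\ w = u ++ v, rmatch e u & rmatch f v].
Proof.
split=> [H|[u [v [-> Hu Hv]]]]; last exact: rm_cat.
by inversion H; subst; exists u, v.
Qed.

(* A nonempty word lies in EF iff one factor is empty and the other matches,
   or some proper factorization, read off in the cut semigroup, matches. *)
Lemma recognizable_cat e f : recognizable (rmatch e) -> recognizable (rmatch f) ->
  recognizable (rmatch (RCat e f)).
Proof.
move=> [S [phi [P HP]]] [T [psi [Q HQ]]].
pose Phi x : prod_fsg S T := (phi x, psi x).
exists (cut_fsg (prod_fsg S T)), (cut_map Phi),
  (fun o : S1 (cut_fsg (prod_fsg S T)) => if o is Some t then
     [|| P None && Q (Some t.1.2), P (Some t.1.1) && Q None |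
         [exists p in t.2, P (Some p.1.1) && Q (Some p.2.2)]]
   else P None && Q None) => w.
rewrite rmatch_catP; case: w => [|x s].
  split=> [[[|? ?] [[|? ?] [// _ He Hf]]]|/andP [He Hf]].
  + by apply/andP; split; [exact/(HP [::]) | exact/(HQ [::])].
  + by exists [::], [::]; split=> //; [exact/(HP [::]) | exact/(HQ [::])].
have E1 : Some (io_fun (io_word x s) (cut_map Phi)).1.1 = wval phi (x :: s).
  by rewrite -(wval_fst phi psi) -(wval_cut_fst Phi).
have E2 : Some (io_fun (io_word x s) (cut_map Phi)).1.2 = wval psi (x :: s).
  by rewrite -(wval_snd phi psi) -(wval_cut_fst Phi).
rewrite /= E1 E2; split.
- case=> -[|x1 u] [v [Ew /HP Pu /HQ Qv]].
    by rewrite Ew Pu Qv.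
  case: v Ew Qv => [|x2 v] Ew Qv.
    by rewrite cats0 in Ew; rewrite Ew Pu Qv orbT.
  apply/orP; right; apply/orP; right; apply/exists_inP.
  exists (io_fun (io_word x1 u) Phi, io_fun (io_word x2 v) Phi).
    by apply/(mem_cut_word Phi); exists (x1 :: u), (x2 :: v).
  by rewrite /= /Phi io_fun_fst io_fun_snd; apply/andP.
- case/or3P => [/andP [/(HP [::]) He /HQ Hf]|/andP [/HP He /(HQ [::]) Hf]|].
  + by exists [::], (x :: s).
  + by exists (x :: s), [::]; rewrite cats0.
  + case/exists_inP => -[p1 p2] /(mem_cut_word Phi) [u [v [Ew Eu Ev]]] /andP /= [Pu Qv].
    exists u, v; split=> //.
    * by apply/HP; rewrite -(wval_fst phi psi) -/Phi Eu.
    * by apply/HQ; rewrite -(wval_snd phi psi) -/Phi Ev.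
Qed.

End RationalRecognizable.

Section RelationSemigroup.
Variable O : finType.

Definition rel_op (A B : {set O * O}) : {set O * O} :=
  [set p | [exists z, ((p.1, z) \in A) && ((z, p.2) \in B)]].

Lemma mem_rel_op A B p q :
  (p, q) \in rel_op A B <-> exists z, (p, z) \in A /\ (z, q) \in B.
Proof.
rewrite inE; split=> [/existsP [z /andP [pz zq]]|[z [pz zq]]]; first by exists z.
by apply/existsP; exists z; rewrite pz zq.
Qed.

Lemma rel_opA : associative rel_op.
Proof.
move=> A B C; apply/setP => -[p q]; apply/idP/idP.
- case/mem_rel_op => z [pz /mem_rel_op [z' [zz' z'q]]].
  by apply/mem_rel_op; exists z'; split=> //; apply/mem_rel_op; exists z.
- case/mem_rel_op => z [/mem_rel_op [z' [pz' z'z]] zq].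
  by apply/mem_rel_op; exists z'; split=> //; apply/mem_rel_op; exists z.
Qed.

Definition rel_fsg : fsg := FSG rel_opA.

End RelationSemigroup.

Lemma rmatch_star_cat (X : Type) (e : rexp X) u v :
  rmatch (RStar e) u -> rmatch (RStar e) v -> rmatch (RStar e) (u ++ v).
Proof.
move=> Hu Hv; move Ee: (RStar e) Hu => e' Hu.
elim: Hu Ee => // [e0 [<-] //|e0 u0 v0 Hu0 _ _ IH [Ee0]]; subst e0.
by rewrite -catA; apply: rm_starS => //; exact: IH.
Qed.

(* A word lies in e* iff the automaton on S^1 that either extends the current
   factor or, when the current factor matches e, starts a new one, can go from
   None to an accepting state; its transition relations form a semigroup. *)
Section StarRecognizable.
Variables (X : Type) (e : rexp X) (S : fsg) (phi : X -> S) (P : pred (S1 S)).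
Hypothesis e_rec : forall w, rmatch e w <-> P (wval phi w).
Local Notation op := (@fmon_op (S1 S)).

Definition star_step x (p q : S1 S) : bool :=
  (q == op p (Some (phi x))) || (P p && (q == Some (phi x))).

Definition star_map x : rel_fsg (S1 S) := [set pq | star_step x pq.1 pq.2].

Fixpoint reach (p : S1 S) (w : seq X) (q : S1 S) : Prop :=
  if w is x :: w' then exists r, star_step x p r /\ reach r w' q else q = p.

Lemma mem_star_word x s p q :
  (p, q) \in io_fun (io_word x s) star_map <-> reach p (x :: s) q.
Proof.
elim: s x p => [|y s IH] x p.
  by rewrite /= inE; split=> [h|[r [h ->]]]; [exists q|].
split.
- by case/mem_rel_op => z [pz /IH zq]; exists z; split=> //; rewrite inE in pz.
- case=> r [pr rq]; apply/mem_rel_op; exists r; split; first by rewrite inE.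
  exact/IH.
Qed.

Lemma reach_wval p w : reach p w (op p (wval phi w)).
Proof.
elim: w p => [|x w IH] p; first by case: p.
exists (op p (Some (phi x))); split; first by rewrite /star_step eqxx.
by rewrite wval_cons fmon_assoc; apply: IH.
Qed.

Lemma reach_cat p u r v q : reach p u r -> reach r v q -> reach p (u ++ v) q.
Proof.
elim: u p => [|x u IH] p /=; first by move=> ->.
by case=> r' [pr' r'r] rq; exists r'; split=> //; apply: IH rq.
Qed.

Lemma reach_restart p x v q : P p -> reach None (x :: v) q -> reach p (x :: v) q.
Proof.
move=> Pp [r [step_r rq]]; exists r; split=> //.
have -> : r = Some (phi x) by case/orP: step_r => [/eqP ->|/andP [_ /eqP ->]].
by rewrite /star_step Pp eqxx orbT.
Qed.

Lemma reach_split p w q : reach p w q ->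
  q = op p (wval phi w) \/ exists u m v, [/\ w = u ++ m ++ v,
    P (op p (wval phi u)), rmatch (RStar e) m & q = wval phi v].
Proof.
elim: w p => [|x w IH] p; first by move=> /= ->; left; case: p.
case=> r [/orP [/eqP ->|/andP [Pp /eqP ->]] /IH [->|[u [m [v [-> Pu Hm ->]]]]]].
- by left; rewrite wval_cons fmon_assoc.
- right; exists (x :: u), m, v; split=> //.
  by rewrite wval_cons fmon_assoc.
- right; exists [::], [::], (x :: w).
  by split; [|case: p Pp | exact: rm_star0 | rewrite wval_cons].
- right; exists [::], ((x :: u) ++ m), v; split=> //.
  + by rewrite catA.
  + by case: p Pp.
  + by apply: rm_starS => //; apply/e_rec; rewrite wval_cons.
Qed.

Lemma rmatch_star_reach w : rmatch (RStar e) w ->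
  w = [::] \/ exists q, reach None w q /\ P q.
Proof.
move Ee: (RStar e) => e' H; elim: H Ee => // [_ _|e0 u v Hu _ Hv IH [Ee0]]; first by left.
subst e0; have reach_u x u' : reach None (x :: u') (wval phi (x :: u')).
  exact: reach_wval.
case: v Hv IH => [|y v] Hv IH.
  rewrite cats0; case: u Hu => [|x u] Hu; first by left.
  by right; exists (wval phi (x :: u)); split; [exact: reach_u | exact/e_rec].
case: (IH erefl) => [//|[q [reach_q Pq]]]; right; exists q; split=> //.
case: u Hu => [//|x u] Hu; apply: reach_cat (reach_u x u) _.
exact: reach_restart (proj1 (e_rec _) Hu) reach_q.
Qed.

Lemma recognized_star_recognizable : recognizable (rmatch (RStar e)).
Proof.
exists (rel_fsg (S1 S)), star_map,
  (fun o : S1 (rel_fsg (S1 S)) =>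
     if o is Some R then [exists q, ((None, q) \in R) && P q] else true).
case=> [|x s]; first by split=> // _; exact: rm_star0.
split.
- case/rmatch_star_reach => [//|[q [reach_q Pq]]]; apply/existsP; exists q.
  by rewrite Pq andbT; exact/mem_star_word.
- case/existsP => q /andP [/mem_star_word reach_q Pq].
  have [Eq|[u [m [v [-> Pu Hm Eq]]]]] := reach_split reach_q.
  + rewrite -[x :: s]cats0; apply: rm_starS; last exact: rm_star0.
    by apply/e_rec; rewrite Eq in Pq.
  + apply: rm_starS; first by apply/e_rec.
    apply: rmatch_star_cat => //; rewrite -[v]cats0.
    apply: rm_starS; last exact: rm_star0.
    by apply/e_rec; rewrite -Eq.
Qed.

End StarRecognizable.

Lemma recognizable_star (X : Type) (e : rexp X) :
  recognizable (rmatch e) -> recognizable (rmatch (RStar e)).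
Proof. by case=> S [phi [P e_rec]]; exact: recognized_star_recognizable e_rec. Qed.

Lemma rational_recognizable (X : eqType) (K : seq X -> Prop) :
  rational K -> recognizable K.
Proof.
case=> e eK; suff [S [phi [P e_rec]]] : recognizable (rmatch e).
  by exists S, phi, P => w; rewrite eK.
elim: e {eK} => [||x|e IHe f IHf|e IHe f IHf|e IHe].
- exact: recognizable_void.
- exact: recognizable_eps.
- exact: recognizable_lit.
- exact: recognizable_union.
- exact: recognizable_cat.
- exact: recognizable_star.
Qed.

Section ClosureProduct.
Variable X : Type.

Lemma io_word_cat (x y : X) s t :
  io_word x (s ++ y :: t) = io_mul (io_word x s) (io_word y t).
Proof.
by apply: io_ext_ev => S psi; rewrite ev_mul; exact: (wval_cat psi (x :: s) (y :: t)).
Qed.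

Lemma agree_mul (f1 f2 g1 g2 : io X) N :
  agree f1 g1 N -> agree f2 g2 N -> agree (io_mul f1 f2) (io_mul g1 g2) N.
Proof.
elim: N => [//|p N IH] /= [E1 A1] [E2 A2]; split; last exact: IH.
by rewrite E1 E2.
Qed.

Lemma closure_in_mul (sig : Nhat -> Prop) (K L : seq X -> Prop) g h :
  closure_in (in_sigma sig) (lang_img K) g -> closure_in (in_sigma sig) (lang_img L) h ->
  closure_in (in_sigma sig) (lang_img (cat_lang K L)) (io_mul g h).
Proof.
case=> sig_g cl_g [sig_h cl_h]; split; first by constructor.
move=> N; have [_ [[x [s [Ks ->]]] Ag]] := cl_g N.
have [_ [[y [t [Lt ->]]] Ah]] := cl_h N.
exists (io_word x (s ++ y :: t)); split; last by rewrite io_word_cat; exact: agree_mul.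
by exists x, (s ++ y :: t); split=> //; exists (x :: s), (y :: t).
Qed.

End ClosureProduct.

Theorem theorem3p4 (sig : Nhat -> Prop)
  (sig_unary : forall a, sig a -> nh_nonnat a)
  (sig_kappa : exists a, sig a /\ nh_is_omega_minus_one a)
  (X : finType) (K L : seq X -> Prop)
  (K_plus : plus_lang K) (L_plus : plus_lang L)
  (K_rat : rational K) (L_rat : rational L) :
  forall f : io X,
    closure_in (in_sigma sig) (lang_img (cat_lang K L)) f <->
    set_mul (closure_in (in_sigma sig) (lang_img K))
            (closure_in (in_sigma sig) (lang_img L)) f.
Proof.
have [w [sig_w w_omega1]] := sig_kappa.
have [SK [phiK [PK K_rec]]] := rational_recognizable K_rat.
have [SL [phiL [PL L_rec]]] := rational_recognizable L_rat.
pose Phi x : prod_fsg SK SL := (phiK x, phiL x).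
move=> f; split; last by case=> g [h [cl_g [cl_h ->]]]; exact: closure_in_mul.
case=> sig_f /(_ [:: existT _ _ (cut_map Phi)]).
case=> _ [[x [s [[u [v [Ku [Lv Euv]]]] ->]]] [Ef _]].
case: u Ku Euv => [/K_plus//|x1 u] Ku Euv; case: v Lv Euv => [/L_plus//|x2 v] Lv Euv.
have uv_in : (io_fun (io_word x1 u) Phi, io_fun (io_word x2 v) Phi)
               \in (io_fun f (cut_map Phi)).2.
  by rewrite -Ef; apply/mem_cut_word; exists (x1 :: u), (x2 :: v).
have [g [h [sig_g sig_h -> Eg Eh]]] :=
  in_sigma_cut_factorable sig_unary sig_w w_omega1 sig_f uv_in.
exists g, h; split; last split=> //.
- apply: (in_sigma_closure_recognized sig_unary K_rec sig_g).
  by rewrite (ev_fst phiK phiL) -/Phi Eg /= io_fun_fst; apply/(K_rec (x1 :: u)).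
- apply: (in_sigma_closure_recognized sig_unary L_rec sig_h).
  by rewrite (ev_snd phiK phiL) -/Phi Eh /= io_fun_snd; apply/(L_rec (x2 :: v)).
Qed.
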